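(* Let $\mathbf v=(v_1,\dots,v_m)$ and $\mathbf k=(k_1,\dots,k_m)$ be $m$-tuples of positive integers with $2\le k_i\le v_i$ for all $i$. Define $i\sim j$ on $\{1,\dots,m\}$ if and only if $v_i=v_j$ and $k_i=k_j$, and let $R$ be a set of equivalence class representatives. Then $C(\mathbf v,\mathbf k,2)=C(\mathbf v^R,\mathbf k^R,2)$.
   Context: For $R\subseteq\{1,\dots,m\}$, $\mathbf v^R$ denotes the tuple of entries of $\mathbf v$ in positions from $R$ (in increasing order). For tuples $\mathbf v,\mathbf k$ of positive integers of the same length $p$ with $\mathbf k\le\mathbf v$ entrywise: let $X_1,\dots,X_p$ be pairwise disjoint sets with $|X_i|=v_i$; a block is a $p$-tuple $(B_1,\dots,B_p)$ with $B_i\subseteq X_i$, $|B_i|=k_i$; a $p$-tuple of sets $(T_1,\dots,T_p)$ is $(\mathbf v,\mathbf k,2)$-admissible if $T_i\subseteq X_i$, $|T_i|\le k_i$ and $\sum|T_i|=2$, and is contained in a block if $T_i\subseteq B_i$ for all $i$. A ${\rm GC}(\mathbf v,\mathbf k,2)$ is a finite family (repetitions allowed) of blocks containing every admissible tuple in at least one block; $C(\mathbf v,\mathbf k,2)$ is the minimum number of blocks. *)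

From Stdlib Require Import ClassicalEpsilon.
From mathcomp Require Import all_boot.
Unset Printing Implicit Defensive.

(* The ground set for parameter tuple v = (v_1,...,v_p): the disjoint union of
   X_i = 'I_(v_i), i.e. points are pairs (i, x) with x < v_i. *)
Definition pt (v : seq nat) : finType := {i : 'I_(size v) & 'I_(nth 0 v i)}.

Definition part (v : seq nat) (A : {set pt v}) (i : 'I_(size v)) : {set pt v} :=
  [set x in A | tag x == i].

(* A block: B_i subset of X_i with |B_i| = k_i for every i (B = union of B_i). *)
Definition is_block (v k : seq nat) (B : {set pt v}) : bool :=
  [forall i : 'I_(size v), #|part v B i| == nth 0 k i].

(* A (v,k,2)-admissible tuple (T_1,...,T_p): T_i subset X_i, |T_i| <= k_i,
   sum |T_i| = 2 (represented by the union T of the T_i). *)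
Definition admissible2 (v k : seq nat) (T : {set pt v}) : bool :=
  (#|T| == 2) && [forall i : 'I_(size v), #|part v T i| <= nth 0 k i].

(* A GC(v,k,2): a finite family (with repetitions) of blocks such that every
   admissible tuple is contained in some block. *)
Definition is_GC2 (v k : seq nat) (F : seq {set pt v}) : bool :=
  all (is_block v k) F &&
  [forall T : {set pt v}, admissible2 v k T ==> has (fun B : {set pt v} => T \subset B) F].

Definition GC2_of_size (v k : seq nat) (n : nat) : bool :=
  [exists F : n.-tuple {set pt v}, is_GC2 v k F].

(* C(v,k,2): the minimum number of blocks of a GC(v,k,2)
   (0 by convention if no GC exists, which never happens when k <= v). *)
Definition C2 (v k : seq nat) : nat :=
  match excluded_middle_informative (exists n, GC2_of_size v k n) with
  | left H => ex_minn H
  | right _ => 0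
  end.

Definition subtuple (v : seq nat) {m : nat} (R : {set 'I_m}) : seq nat :=
  [seq nth 0 v (val i) | i <- enum R].

Definition simvk (v k : seq nat) (i j : nat) : bool :=
  (nth 0 v i == nth 0 v j) && (nth 0 k i == nth 0 k j).

(* A GC(w,l,2) pulls back to a GC(v,k,2) of the same size along any map f
   from the positions of v to those of w with v_i = w_(f i) and k_i = l_(f i):
   identify X_i with X_(f i) and take preimages of the blocks.  Preimages of
   blocks are blocks, and since every l_j >= 2, every 2-subset of the ground
   set is admissible; so the image of an admissible pair, padded to a 2-set if
   it collapsed to a point, lies in some block, whose preimage covers the pair.
   Mapping each position of v to its representative in R, and including R
   into the positions of v, gives such maps in both directions. *)
From Stdlib Require Import ClassicalEpsilon.
From mathcomp Require Import all_boot.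

Lemma subset_card_extend (T : finType) (S : {set T}) n :
  #|S| <= n <= #|T| -> exists2 S' : {set T}, S \subset S' & #|S'| = n.
Proof.
elim: n => [|n IHn] /andP [leSn lenT].
  by exists S => //; apply/eqP; rewrite -leqn0.
have [eqSn | neSn] := eqVneq #|S| n.+1; first by exists S.
have [S' sSS' cardS'] : exists2 S' : {set T}, S \subset S' & #|S'| = n.
  by apply: IHn; rewrite -ltnS ltn_neqAle neSn leSn ltnW.
have [x xS'] : exists x, x \notin S'.
  apply/existsP; rewrite -negb_forall; apply: contraTN lenT => /forallP allS'.
  by rewrite -ltnNge ltnS -cardS' -cardsT subset_leq_card //; apply/subsetP.
exists (x |: S'); first by rewrite subsetU // orbC sSS'.
by rewrite cardsU1 xS' cardS'.
Qed.

Lemma eq_pt (v : seq nat) (x y : pt v) :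
  tag x = tag y -> val (tagged x) = val (tagged y) -> x = y.
Proof. by case: x => i a; case: y => j b /= eq_ij; subst j => /val_inj ->. Qed.

Lemma part_sub {v : seq nat} (A : {set pt v}) i : part v A i \subset A.
Proof. by apply/subsetP => x; rewrite inE => /andP []. Qed.

Lemma admissible2_card (v k : seq nat) (T : {set pt v}) :
  (forall i : 'I_(size v), 2 <= nth 0 k i) -> admissible2 v k T = (#|T| == 2).
Proof.
move=> k_ge2; rewrite /admissible2; case: eqP => //= cardT.
apply/forallP => i.
by rewrite (leq_trans (subset_leq_card (part_sub T i))) // cardT k_ge2.
Qed.

Lemma nth_leq_card_pt (v : seq nat) (i : 'I_(size v)) : nth 0 v i <= #|pt v|.
Proof.
rewrite -[X in X <= _]card_ord.
apply: (@leq_card _ _ (fun a => Tagged (fun j : 'I_(size v) => 'I_(nth 0 v j)) a : pt v)).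
exact: eq_from_Tagged.
Qed.

Section Pullback.

Variables (v k w l : seq nat) (f : 'I_(size v) -> 'I_(size w)).
Hypothesis v_f : forall i : 'I_(size v), nth 0 v i = nth 0 w (f i).
Hypothesis k_f : forall i : 'I_(size v), nth 0 k i = nth 0 l (f i).
Hypothesis l_bounds : forall j : 'I_(size w), 2 <= nth 0 l j <= nth 0 w j.

Definition pt_map (x : pt v) : pt w :=
  Tagged (fun j : 'I_(size w) => 'I_(nth 0 w j)) (cast_ord (v_f (tag x)) (tagged x)).

Lemma part_pt_map_preim (B : {set pt w}) i :
  part w B (f i) = pt_map @: part v (pt_map @^-1: B) i.
Proof.
apply/setP => y; rewrite !inE; apply/idP/imsetP.
- case/andP => yB /eqP tag_y.
  have y_lt : val (tagged y) < nth 0 v i by rewrite v_f -tag_y; apply: ltn_ord.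
  pose x := Tagged (fun j : 'I_(size v) => 'I_(nth 0 v j)) (Ordinal y_lt).
  have x_y : pt_map x = y by apply: eq_pt.
  by exists x; rewrite // !inE x_y yB /= eqxx.
- by case=> x; rewrite !inE => /andP [xB /eqP <-] ->; rewrite xB /=.
Qed.

Lemma card_part_preim (B : {set pt w}) i :
  #|part v (pt_map @^-1: B) i| = #|part w B (f i)|.
Proof.
rewrite part_pt_map_preim card_in_imset // => x y.
rewrite !inE => /andP [_ /eqP tag_x] /andP [_ /eqP tag_y] eq_xy.
apply: eq_pt; first by rewrite tag_x tag_y.
exact: (congr1 (fun z : pt w => val (tagged z)) eq_xy).
Qed.

Lemma is_block_preim (B : {set pt w}) :
  is_block w l B -> is_block v k (pt_map @^-1: B).
Proof.
by move=> /forallP blockB; apply/forallP => i; rewrite card_part_preim k_f.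
Qed.

Lemma is_GC2_preim (F : seq {set pt w}) :
  is_GC2 w l F -> is_GC2 v k (map (fun B : {set pt w} => pt_map @^-1: B) F).
Proof.
case/andP => /allP blocksF /forallP coverF; apply/andP; split.
  by rewrite all_map; apply/allP => B /blocksF; apply: is_block_preim.
apply/forallP => T; apply/implyP => /andP [/eqP cardT _]; rewrite has_map.
have [x xT] : exists x, x \in T by apply/set0Pn; rewrite -card_gt0 cardT.
have [T' sTT' cardT'] : exists2 T' : {set pt w}, pt_map @: T \subset T' & #|T'| = 2.
  apply: subset_card_extend; rewrite -cardT leq_imset_card /=.
  case/andP: (l_bounds (tag (pt_map x))) => le2l lelw.
  by rewrite cardT (leq_trans le2l (leq_trans lelw (nth_leq_card_pt _ _))).
have /implyP/(_ _)/hasP [|B BF sT'B] := coverF T'.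
  by rewrite admissible2_card ?cardT' // => j; case/andP: (l_bounds j).
apply/hasP; exists B => //=; apply/subsetP => y yT; rewrite inE.
by apply: (subsetP sT'B); apply: (subsetP sTT'); apply: imset_f.
Qed.

Lemma GC2_of_size_preim n : GC2_of_size w l n -> GC2_of_size v k n.
Proof.
case/existsP => F GC_F; apply/existsP.
by exists (map_tuple (fun B : {set pt w} => pt_map @^-1: B) F); apply: is_GC2_preim.
Qed.

End Pullback.

Lemma eq_C2 (v k w l : seq nat) :
  (forall n, GC2_of_size v k n = GC2_of_size w l n) -> C2 v k = C2 w l.
Proof.
move=> eq_GC; rewrite /C2.
case: excluded_middle_informative => [exv|nexv];
  case: excluded_middle_informative => [exw|nexw].
- case: ex_minnP => m GCm min_m; case: ex_minnP => n GCn min_n.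
  by apply/eqP; rewrite eqn_leq min_m ?eq_GC // min_n // -eq_GC.
- by case: nexw; case: exv => n; exists n; rewrite -eq_GC.
- by case: nexv; case: exw => n; exists n; rewrite eq_GC.
- by [].
Qed.

Definition same_vk (v k w l : seq nat) (i j : nat) : Prop :=
  nth 0 v i = nth 0 w j /\ nth 0 k i = nth 0 l j.

Lemma GC2_of_size_same_vk (v k w l : seq nat) n :
  (forall j : 'I_(size w), 2 <= nth 0 l j <= nth 0 w j) ->
  (forall i : 'I_(size v), exists j : 'I_(size w), same_vk v k w l i j) ->
  GC2_of_size w l n -> GC2_of_size v k n.
Proof.
move=> l_bounds /fin_all_exists [f same_f].
by apply: (@GC2_of_size_preim v k w l f) => // i; case: (same_f i).
Qed.

Lemma C2_same_vk (v k w l : seq nat) :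
  (forall i : 'I_(size v), 2 <= nth 0 k i <= nth 0 v i) ->
  (forall i : 'I_(size v), exists j : 'I_(size w), same_vk v k w l i j) ->
  (forall j : 'I_(size w), exists i : 'I_(size v), same_vk w l v k j i) ->
  C2 v k = C2 w l.
Proof.
move=> k_bounds vw wv.
have l_bounds (j : 'I_(size w)) : 2 <= nth 0 l j <= nth 0 w j.
  by have [i [-> ->]] := wv j; apply: k_bounds.
apply: eq_C2 => n; apply/idP/idP; exact: GC2_of_size_same_vk.
Qed.

Lemma size_subtuple (v : seq nat) m (R : {set 'I_m}) : size (subtuple v R) = #|R|.
Proof. by rewrite size_map cardE. Qed.

Lemma nth_subtuple (v : seq nat) m (R : {set 'I_m}) x0 t :
  t < #|R| -> nth 0 (subtuple v R) t = nth 0 v (nth x0 (enum R) t).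
Proof. by move=> t_lt; rewrite (nth_map x0) // -cardE. Qed.

Lemma nth_subtuple_index (v : seq nat) m (R : {set 'I_m}) j :
  j \in R -> nth 0 (subtuple v R) (index j (enum R)) = nth 0 v j.
Proof.
move=> jR; rewrite (@nth_subtuple v _ R j) ?nth_index ?mem_enum //.
by rewrite cardE index_mem mem_enum.
Qed.

Theorem corollary3p14 (v k : seq nat) (R : {set 'I_(size v)}) :
  size k = size v ->
  (forall i, i < size v -> 2 <= nth 0 k i <= nth 0 v i) ->
  (* R is a set of representatives of the equivalence classes of ~ *)
  (forall i : 'I_(size v), #|[set j in R | simvk v k i j]| = 1) ->
  C2 v k = C2 (subtuple v R) (subtuple k R).
Proof.
move=> _ k_bounds reprR; apply: C2_same_vk => [i | i | t].
- exact: k_bounds.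
- have /card_gt0P [r] : 0 < #|[set j in R | simvk v k i j]| by rewrite reprR.
  rewrite !inE => /andP [rR /andP [/eqP v_ir /eqP k_ir]].
  have r_lt : index r (enum R) < size (subtuple v R).
    by rewrite size_subtuple cardE index_mem mem_enum.
  by exists (Ordinal r_lt); rewrite /same_vk /= !nth_subtuple_index.
- have t_lt : t < #|R| by rewrite -(size_subtuple v).
  have [x0 _] : exists x0 : 'I_(size v), true.
    by move: t_lt; rewrite cardE; case: (enum R) => [|x0 s] //; exists x0.
  by exists (nth x0 (enum R) t); rewrite /same_vk !(nth_subtuple _ _ _ x0).
Qed.
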